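(* Suppose we have $n\ge2$ agents with additive, identical, normalized valuations, and let $a\in[0,1]$. Suppose the accuracy is $\eta<1-\frac{1-a}{(2n-1)(1+a)}$, i.e., the error between the provided prediction $(p(g_t))_{t\in[T']}$ and the true values $(v(g_t))_{t\in[T]}$ is $D=1-\eta>\frac{1-a}{(2n-1)(1+a)}$. Then any algorithm that computes an exact EFX allocation on the predictions and follows it (allocating each arriving good $g_t$ to the agent that receives $g_t$ in that allocation) while ignoring the true values, is not able to compute an $a$-EFX allocation according to the true valuation, even when $T'=T$.
   Context: Online fair division with predictions and identical valuations: goods $g_1,\dots,g_T$ arrive one per time step; all agents share a true additive normalized valuation $v$ ($v(g_t)\ge0$, $\sum_{t\in[T]}v(g_t)=1$, $v(S)=\sum_{g\in S}v(g)$) and a prediction $p=(p(g_1),\dots,p(g_{T'}))$, an additive normalized valuation over $T'$ predicted goods. The error is $D=\frac12\sum_{t=1}^{\max\{T,T'\}}|p(g_t)-v(g_t)|$ (missing entries set to $0$), and the accuracy is $\eta=1-D$. For $S\ne\emptyset$ and valuation $f$, $\bar S^f=S\setminus\{g\}$ with $g\in\arg\max_{g'\in S}f(S\setminus\{g'\})$, $\bar\emptyset^f=\emptyset$. An allocation $(A_1,\dots,A_n)$ is $a$-EFX with respect to $f$ if $f(A_i)\ge a\cdot f(\bar{A_j}^f)$ for all $i,j$; exact EFX means $1$-EFX. *)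

From mathcomp Require Import all_boot all_order all_algebra.
Set Implicit Arguments. Unset Strict Implicit. Unset Printing Implicit Defensive.
Import Order.TTheory GRing.Theory Num.Theory.
Local Open Scope ring_scope.

Section Defs.
Variable R : realFieldType.

Definition bval (T : nat) (f : 'I_T -> R) (S : {set 'I_T}) : R :=
  \sum_(g in S) f g.

Definition normalized (T : nat) (f : 'I_T -> R) : Prop :=
  (forall t, 0 <= f t) /\ \sum_(t < T) f t = 1.

Definition bar (T : nat) (f : 'I_T -> R) (S : {set 'I_T}) : {set 'I_T} :=
  match [pick x in S] with
  | Some x => S :\ Order.arg_max x (fun g => g \in S) (fun g => bval f (S :\ g))
  | None => set0
  end.

(* error D = 1/2 sum_t |p(g_t) - v(g_t)| (here T' = T) and accuracy eta = 1 - D *)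
Definition pred_error (T : nat) (p v : 'I_T -> R) : R :=
  2^-1 * \sum_(t < T) `|p t - v t|.

Definition accuracy (T : nat) (p v : 'I_T -> R) : R := 1 - pred_error p v.

Definition bundle (n T : nat) (A : 'I_T -> 'I_n) (i : 'I_n) : {set 'I_T} :=
  [set t | A t == i].

Definition aEFX (n T : nat) (a : R) (f : 'I_T -> R) (A : 'I_T -> 'I_n) : Prop :=
  forall i j : 'I_n, a * bval f (bar f (bundle A j)) <= bval f (bundle A i).

End Defs.

(* For error D <= 1/2 the prediction is uniform on 2n - 1 goods.  By pigeonhole,
   whatever the algorithm does, some agent j receives two goods x, y and some
   agent i at most one good z.  The true valuation moves value D onto x, taking
   it first from z and then evenly from the remaining goods; agent i is left
   with 1/(2n-1) - min(D, 1/(2n-1)), which is below a v(x) <= a v(bar A_j)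
   as soon as D > (1 - a)/((2n - 1)(1 + a)).
   For D > 1/2 the prediction gives value D to one good o among n + 1 goods.
   Exact EFX for the prediction forces o to be alone in its bundle (otherwise
   some other agent would also need value at least D > 1/2), while
   some agent receives two goods x, y; moving the value of o onto x leaves
   the owner of o with nothing. *)

From mathcomp Require Import all_boot all_order all_algebra.
From mathcomp Require Import zify ring lra.
Set Implicit Arguments. Unset Strict Implicit. Unset Printing Implicit Defensive.
Import Order.TTheory GRing.Theory Num.Theory.
Local Open Scope ring_scope.

Lemma exists_neq_ord (m : nat) (k : 'I_m) : (1 < m)%N -> exists i : 'I_m, i != k.
Proof.
rewrite -[m in (1 < m)%N]card_ord => /card_gt1P[x [y [_ _ xy]]].
by have [xk|] := eqVneq x k; [exists y; rewrite -xk eq_sym | exists x].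
Qed.

Section Bundles.
Variables n T : nat.
Implicit Types (A : 'I_T -> 'I_n).

Lemma sum_card_bundle A : (\sum_(i < n) #|bundle A i|)%N = T.
Proof.
rewrite -[RHS]card_ord -sum1_card (partition_big A xpredT) //=.
by apply: eq_bigr => i _; rewrite -sum1_card; apply: eq_bigl => t; rewrite inE.
Qed.

Lemma exists_bundle_card_gt1 A : (n < T)%N -> exists j, (1 < #|bundle A j|)%N.
Proof.
move=> ltnT; apply/existsP; apply: contraLR ltnT => /existsPn small.
rewrite -leqNgt -(sum_card_bundle A) -[n in (_ <= n)%N]card_ord -sum1_card.
by apply: leq_sum => i _; rewrite leqNgt small.
Qed.

Lemma exists_bundle_card_le1 A : (T < n.*2)%N -> exists i, (#|bundle A i| <= 1)%N.
Proof.
move=> ltT2n; apply/existsP; apply: contraLR ltT2n => /existsPn big.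
rewrite -leqNgt -(sum_card_bundle A) -muln2 -[n in (n * _)%N]card_ord -sum_nat_const.
by apply: leq_sum => i _; rewrite ltnNge big.
Qed.

End Bundles.

Section Valuations.
Variable R : realFieldType.
Variable T : nat.
Implicit Types (f : 'I_T -> R) (S : {set 'I_T}).

Lemma mem_bval_le f S x : (forall t, 0 <= f t) -> x \in S -> f x <= bval f S.
Proof.
by move=> f0 xS; rewrite /bval (bigD1 x) //= lerDl sumr_ge0.
Qed.

Lemma mem_bar_le f S x y : (forall t, 0 <= f t) ->
  x \in S -> y \in S -> x != y -> f x <= bval f (bar f S).
Proof.
move=> f0 xS yS xy; rewrite /bar; case: pickP => [x0 x0S|/(_ y)]; last by rewrite yS.
case: (arg_maxP _ x0S) => g _ maxg; apply: le_trans (maxg y yS).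
by apply: mem_bval_le; rewrite // !inE xy.
Qed.

Lemma bval_bundle_pair_le (n : nat) (A : 'I_T -> 'I_n) f i k :
  (forall t, 0 <= f t) -> i != k ->
  bval f (bundle A i) + bval f (bundle A k) <= \sum_(t < T) f t.
Proof.
move=> f0 ik; rewrite /bval !(big_mkcond (fun t => t \in _)) -big_split /=.
apply: ler_sum => t _; rewrite !inE.
have [->|_] := eqVneq (A t) i; last by rewrite add0r; case: ifP.
by rewrite (negbTE ik) addr0.
Qed.

Lemma card_le1_bval_le S x y : (#|S| <= 1)%N -> x \notin S -> y != x ->
  exists2 z, z != x & forall f, (forall t, 0 <= f t) -> bval f S <= f z.
Proof.
move=> S1 xS yx; have [->|[z zS]] := set_0Vmem S.
  by exists y => // f f0; rewrite /bval big_set0.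
have -> : S = [set z] by apply/setP => t; rewrite inE (card_le1P S1 z zS t).
exists z; first by apply: contraNneq xS => <-.
by move=> f _; rewrite /bval big_set1.
Qed.

End Valuations.

Section TwoPoint.
Variable R : realFieldType.
Variable T : nat.

Definition twopoint (x z : 'I_T) (u w c : R) (t : 'I_T) : R :=
  if t == x then u else if t == z then w else c.

Lemma sum_twopoint x z u w c : x != z ->
  \sum_(t < T) twopoint x z u w c t = u + w + c * (T%:R - 2).
Proof.
move=> xz; have split_t t : twopoint x z u w c t
    = c + (if t == x then u - c else 0) + (if t == z then w - c else 0).
  rewrite /twopoint; have [->|_] := eqVneq t x; first by rewrite (negbTE xz); ring.
  by case: ifP => _; ring.
under eq_bigr do rewrite split_t.
rewrite !big_split /= -!big_mkcond !big_pred1_eq sumr_const card_ord -mulr_natr.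
ring.
Qed.

Lemma normalized_twopoint x z u w c : x != z -> 0 <= u -> 0 <= w -> 0 <= c ->
  u + w + c * (T%:R - 2) = 1 -> normalized (twopoint x z u w c).
Proof.
move=> xz u0 w0 c0 sum1; split; last by rewrite sum_twopoint.
by move=> t; rewrite /twopoint; case: ifP => _ //; case: ifP.
Qed.

Lemma pred_error_twopoint x z u w c u' w' c' : x != z ->
  pred_error (twopoint x z u w c) (twopoint x z u' w' c')
  = 2^-1 * (`|u - u'| + `|w - w'| + `|c - c'| * (T%:R - 2)).
Proof.
move=> xz; rewrite /pred_error -(sum_twopoint _ _ _ xz); congr (_ * _).
by apply: eq_bigr => t _; rewrite /twopoint; case: ifP => _ //; case: ifP.
Qed.

Lemma eq_normalized (f g : 'I_T -> R) : f =1 g -> normalized f -> normalized g.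
Proof.
move=> fg [f0 sum1]; split=> [t|]; first by rewrite -fg.
by rewrite -sum1; apply: eq_bigr => t _; rewrite fg.
Qed.

Lemma eq_pred_error (p p' v : 'I_T -> R) :
  p =1 p' -> pred_error p v = pred_error p' v.
Proof.
by move=> pp'; rewrite /pred_error; congr (_ * _); apply: eq_bigr => t _; rewrite pp'.
Qed.

Definition uniform (t : 'I_T) : R := T%:R^-1.

Lemma normalized_uniform : (0 < T)%N -> normalized uniform.
Proof.
move=> T0; split=> [t|]; first by rewrite invr_ge0 ler0n.
by rewrite /uniform sumr_const card_ord -[_ *+ T]mulr_natr mulVf // pnatr_eq0 -lt0n.
Qed.

Lemma uniform_twopoint x z : uniform =1 twopoint x z T%:R^-1 T%:R^-1 T%:R^-1.
Proof. by move=> t; rewrite /uniform /twopoint; case: ifP => _ //; case: ifP. Qed.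

Definition heavy (o : 'I_T) (D : R) (t : 'I_T) : R :=
  if t == o then D else (1 - D) / (T%:R - 1).

Lemma heavy_twopoint o x D :
  heavy o D =1 twopoint o x D ((1 - D) / (T%:R - 1)) ((1 - D) / (T%:R - 1)).
Proof. by move=> t; rewrite /heavy /twopoint; case: ifP => _ //; case: ifP. Qed.

Lemma normalized_heavy o D : (1 < T)%N -> 0 <= D <= 1 -> normalized (heavy o D).
Proof.
move=> T1 /andP[D0 D1]; have [x xo] := exists_neq_ord o T1.
have T1R : 0 < T%:R - 1 :> R by rewrite subr_gt0 ltr1n.
apply: eq_normalized (fsym (heavy_twopoint o x D)) _.
have q0 : 0 <= (1 - D) / (T%:R - 1) by apply: divr_ge0; [rewrite subr_ge0 | exact: ltW].
apply: normalized_twopoint => //; first by rewrite eq_sym.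
by field; rewrite gt_eqF.
Qed.

End TwoPoint.

Arguments uniform {R T}.

Section Fooling.
Variable R : realFieldType.
Variables n T : nat.
Implicit Types (f : 'I_T -> R) (A : 'I_T -> 'I_n).

Lemma not_aEFX_of_pair (a : R) f A i j x y : 0 <= a -> (forall t, 0 <= f t) ->
  x \in bundle A j -> y \in bundle A j -> x != y ->
  bval f (bundle A i) < a * f x -> ~ aEFX a f A.
Proof.
move=> a0 f0 xj yj xy lt_ix /(_ i j) efx.
by move: lt_ix; rewrite ltNge (le_trans (ler_wpM2l a0 (mem_bar_le f0 xj yj xy)) efx).
Qed.

Lemma aEFX1_heavy_good_alone f A o : (1 < n)%N -> normalized f -> 1 < 2 * f o ->
  aEFX 1 f A -> bundle A (A o) = [set o].
Proof.
move=> n1 [f0 sum1] heavy_o efx; apply/setP => t; rewrite !inE.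
have [-> | t_o] := eqVneq t o; first exact: eqxx.
apply/negP => Ato; have [i i_o] := exists_neq_ord (A o) n1.
have o_in : o \in bundle A (A o) by rewrite inE.
have t_in : t \in bundle A (A o) by rewrite inE.
have bar_o : f o <= bval f (bar f (bundle A (A o))).
  by apply: (mem_bar_le f0 o_in t_in); rewrite eq_sym.
have own_o := mem_bval_le f0 o_in.
have := efx i (A o); rewrite mul1r => efx_i.
have := bval_bundle_pair_le A f0 i_o; rewrite sum1.
lra.
Qed.

Lemma uniform_not_aEFX A (a D : R) : (n < T < n.*2)%N -> 0 < a -> a <= 1 ->
  D <= 2^-1 -> (1 - a) / (T%:R * (1 + a)) < D ->
  exists v, [/\ normalized v, pred_error uniform v = D & ~ aEFX a v A].
Proof.
move=> /andP[ltnT ltT2n] a0 a1 D_half D_big.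
have T0 : 0 < T%:R :> R by rewrite ltr0n; lia.
have T2 : 0 < T%:R - 2 :> R by rewrite subr_gt0 ltr_nat; lia.
set B : R := T%:R^-1.
have B0 : 0 < B by rewrite invr_gt0.
have BT : B * T%:R = 1 by rewrite mulVf // gt_eqF.
have BT2 : B * (T%:R - 2) = 1 - 2 * B by rewrite mulrBr BT; ring.
have B_half : 2 * B <= 1 by rewrite -[leRHS]BT mulrC ler_pM2l // ler_nat; lia.
have D0 : 0 <= D.
  apply: le_trans (ltW D_big); rewrite divr_ge0 ?subr_ge0 ?mulr_ge0 ?ler0n //; lra.
have D_gap : B * (1 - a) < D * (1 + a).
  move: D_big; rewrite ltr_pdivrMr; last by rewrite mulr_gt0 //; lra.
  rewrite -(ltr_pM2l B0).
  have -> : B * (D * (T%:R * (1 + a))) = B * T%:R * (D * (1 + a)) by ring.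
  by rewrite BT mul1r.
have [j /[dup] Aj2 /card_gt1P[x [y [xj yj xy]]]] := exists_bundle_card_gt1 A ltnT.
have [i Ai1] := exists_bundle_card_le1 A ltT2n.
have ij : i != j by apply: contraTneq Ai1 => ->; rewrite -ltnNge.
have x_notin_i : x \notin bundle A i.
  by move: xj; rewrite !inE => /eqP ->; rewrite eq_sym.
have [z zx bound_i] : exists2 z, z != x & forall f : 'I_T -> R,
    (forall t, 0 <= f t) -> bval f (bundle A i) <= f z.
  by apply: (@card_le1_bval_le R _ _ _ y) => //; rewrite eq_sym.
have xz : x != z by rewrite eq_sym.
set m := Num.min D B.
have mD : m <= D by rewrite ge_min lexx.
have mB : m <= B by rewrite ge_min lexx orbT.
have m0 : 0 <= m by rewrite le_min D0 ltW.
set e := (D - m) / (T%:R - 2).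
have eT : e * (T%:R - 2) = D - m by rewrite divfK // gt_eqF.
have e0 : 0 <= e by apply: divr_ge0; [rewrite subr_ge0 | exact: ltW].
have eB : e <= B.
  by rewrite ler_pdivrMr // BT2 /m; have [DB|BD] := leP D B; lra.
set v := twopoint x z (B + D) (B - m) (B - e).
have v_norm : normalized v.
  apply: normalized_twopoint; rewrite ?subr_ge0 //.
  - exact: addr_ge0 (ltW B0) D0.
  - by rewrite mulrBl BT2 eT; ring.
exists v; split => //.
- rewrite (eq_pred_error v (@uniform_twopoint R T x z)) pred_error_twopoint //.
  rewrite -/B opprD addNKr !subKr normrN !ger0_norm // eT.
  by field.
apply: (not_aEFX_of_pair (i := i) (ltW a0) (proj1 v_norm) xj yj xy).
apply: le_lt_trans (bound_i v (proj1 v_norm)) _.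
rewrite /v /twopoint (negbTE zx) !eqxx /m; have [DB|BD] := leP D B.
  lra.
by rewrite subrr mulr_gt0 //; lra.
Qed.

Lemma heavy_not_aEFX A (o : 'I_T) (a D : R) : (1 < n)%N -> (n < T)%N -> 0 < a ->
  2^-1 < D -> D <= 1 -> aEFX 1 (heavy o D) A ->
  exists v, [/\ normalized v, pred_error (heavy o D) v = D & ~ aEFX a v A].
Proof.
move=> n1 ltnT a0 D_big D1 efx.
have T1 : (1 < T)%N by lia.
have T1R : 0 < T%:R - 1 :> R by rewrite subr_gt0 ltr1n.
have D0 : 0 <= D by apply: le_trans (ltW D_big); rewrite invr_ge0 ler0n.
have p_norm : normalized (heavy o D) by apply: normalized_heavy; rewrite ?D0.
have alone : bundle A (A o) = [set o].
  by apply: aEFX1_heavy_good_alone n1 p_norm _ efx; rewrite /heavy eqxx; lra.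
have [j /card_gt1P[x [y [xj yj xy]]]] := exists_bundle_card_gt1 A ltnT.
have o_x : o != x.
  apply: contraNneq xy => ox.
  have : y \in bundle A (A o) by move: xj yj; rewrite -ox !inE => /eqP ->.
  by rewrite alone inE => /eqP ->; rewrite ox.
set q := (1 - D) / (T%:R - 1).
have q0 : 0 <= q by apply: divr_ge0; [rewrite subr_ge0 | exact: ltW].
set v := twopoint o x 0 (D + q) q.
have v_norm : normalized v.
  apply: normalized_twopoint; rewrite ?addr_ge0 //.
  by rewrite /q; field; rewrite gt_eqF.
exists v; split => //.
- rewrite (eq_pred_error v (heavy_twopoint o x D)) pred_error_twopoint //.
  rewrite subr0 subrr normr0 mul0r addr0 opprD addrCA subrr addr0 normrN ger0_norm //.
  by field.
- apply: (not_aEFX_of_pair (i := A o) (ltW a0) (proj1 v_norm) xj yj xy).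
  rewrite alone /bval big_set1 /v /twopoint eqxx eq_sym (negbTE o_x) eqxx.
  by rewrite mulr_gt0 //; lra.
Qed.

End Fooling.

Theorem proposition4p3 (R : realFieldType) (n : nat) (a eta : R)
  (ALG : forall T : nat, ('I_T -> R) -> ('I_T -> 'I_n)) :
  (2 <= n)%N -> 0 < a -> a <= 1 ->
  0 <= eta -> eta < 1 - (1 - a) / ((2 * n - 1)%:R * (1 + a)) ->
  (forall (T : nat) (p : 'I_T -> R), normalized p -> aEFX 1 p (ALG T p)) ->
  exists (T : nat) (v p : 'I_T -> R),
    [/\ normalized v, normalized p, accuracy p v = eta
      & ~ aEFX a v (ALG T p)].
Proof.
move=> n2 a0 a1 eta0 eta_lt efx.
suff [T [v [p [v_norm p_norm err not_efx]]]] : exists T (v p : 'I_T -> R),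
    [/\ normalized v, normalized p, pred_error p v = 1 - eta & ~ aEFX a v (ALG T p)].
  by exists T, v, p; split => //; rewrite /accuracy err subKr.
have [D_small | D_big] := leP (1 - eta) 2^-1.
- have T_bounds : (n < 2 * n - 1 < n.*2)%N by apply/andP; split; lia.
  have [v [v_norm err not_efx]] :=
    uniform_not_aEFX (ALG _ uniform) T_bounds a0 a1 D_small (ltac:(lra)).
  by exists (2 * n - 1)%N, v, uniform; split => //; apply: normalized_uniform; lia.
- have p_norm : normalized (heavy (@ord0 n) (1 - eta)).
    by apply: normalized_heavy; [lia | apply/andP; split; lra].
  have [v [v_norm err not_efx]] :=
    heavy_not_aEFX n2 (ltnSn n) a0 D_big (ltac:(lra)) (efx _ _ p_norm).
  by exists n.+1, v, (heavy ord0 (1 - eta)).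
Qed.
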